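(* Let $\mathfrak{p}$ be a finitely generated proper prime ideal of $\mathcal{S}'(\mathbb{Z}^{d})$. Then there exists $\mathbf{n}_*\in\mathbb{Z}^d$ such that $\mathfrak{p}=\{f\in\mathcal{S}'(\mathbb{Z}^{d}): f(\mathbf{n}_* )=0\}$.
   Context: For $\mathbf{n}=(n_1,\dots,n_d)\in\mathbb{Z}^d$ write $\|\mathbf{n}\|:=|n_1|+\cdots+|n_d|$. $\mathcal{S}'(\mathbb{Z}^{d})$ denotes the set of all maps $f:\mathbb{Z}^d\to\mathbb{C}$ of at most polynomial growth, i.e. for which there exist a real $M>0$ and an integer $m\geq 0$ with $|f(\mathbf{n})|\leq M(1+\|\mathbf{n}\|)^m$ for all $\mathbf{n}\in\mathbb{Z}^d$. It is a commutative unital ring under pointwise addition and multiplication, with unit the constant function $1$. *)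

From HB Require Import structures.
From mathcomp Require Import all_boot all_order all_algebra.
From mathcomp Require Import complex.
From mathcomp Require Import Rstruct.
Set Implicit Arguments. Unset Strict Implicit. Unset Printing Implicit Defensive.
Import Order.TTheory GRing.Theory Num.Theory.
Local Open Scope ring_scope.

Definition CC := complex.complex Rdefinitions.R.

Definition Zd (d : nat) := {ffun 'I_d -> int}.

Definition l1norm (d : nat) (n : Zd d) : nat := (\sum_(i < d) `|n i|%N)%N.

(* f has at most polynomial growth: f in S'(Z^d) *)
Definition tempered (d : nat) (f : Zd d -> CC) : Prop :=
  exists (M : Rdefinitions.R) (m : nat), 0 < M /\
    forall n : Zd d, `|f n| <= ((M * (1 + (l1norm n)%:R) ^+ m : Rdefinitions.R)%:C)%C.

Definition is_ideal (d : nat) (P : (Zd d -> CC) -> Prop) : Prop :=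
  [/\ forall f, P f -> tempered f,
      P (fun _ => 0),
      forall f g, P f -> P g -> P (fun n => f n + g n)
    & forall a f, tempered a -> P f -> P (fun n => a n * f n)].

Definition is_proper_ideal (d : nat) (P : (Zd d -> CC) -> Prop) : Prop :=
  is_ideal P /\ ~ P (fun _ => 1).

Definition is_prime_ideal (d : nat) (P : (Zd d -> CC) -> Prop) : Prop :=
  is_proper_ideal P /\
  forall f g, tempered f -> tempered g -> P (fun n => f n * g n) -> P f \/ P g.

Definition finitely_generated (d : nat) (P : (Zd d -> CC) -> Prop) : Prop :=
  exists gs : seq (Zd d -> CC),
    (forall g, List.In g gs -> P g) /\
    forall f, P f -> exists as_ : seq (Zd d -> CC),
      size as_ = size gs /\ (forall a, List.In a as_ -> tempered a) /\
      forall n, f n = \sum_(i < size gs) nth (fun _ => 0) as_ i n * nth (fun _ => 0) gs i n.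

From HB Require Import structures.
From mathcomp Require Import all_boot all_order all_algebra.
From mathcomp Require Import complex Rstruct.
From mathcomp Require Import ring lra.
From Stdlib Require Import Classical FunctionalExtensionality.
Import Order.TTheory GRing.Theory Num.Theory.
Import ComplexField.Normc.
Local Open Scope ring_scope.
Local Open Scope complex_scope.
Set Implicit Arguments.
Local Notation RR := Rdefinitions.R.

(* Let delta_z be the indicator of {z} and codelta_z = 1 - delta_z.  Since
   delta_z * codelta_z = 0, primality puts delta_z or codelta_z into P.
   - If codelta_z is in P for some z, P is the vanishing ideal at z: a tempered
     f with f z = 0 equals f * codelta_z, while f in P with f z <> 0 would give
     delta_z = (f z)^-1 delta_z f in P and then 1 = delta_z + codelta_z in P.
   - Otherwise every delta_z is in P, which is impossible.  For generators
     g_1..g_k of P put r = sum |g_i|^2 = sum conj(g_i) g_i, an element of P.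
     Every f in P is a combination sum a_i g_i with tempered a_i, whence the
     growth bound |f| <= K * sqrt r with K of polynomial growth.  For f = delta_z
     it shows r > 0 everywhere.  A prime ideal is radical, so sqrt r and r^(1/4)
     are in P, and the growth bound for r^(1/4) yields 1/r <= K^4; thus 1/r is
     tempered and 1 = (1/r) r is in P, contradicting properness. *)

Lemma normc_ge0 (z : CC) : 0 <= normc z.
Proof. by case: z => a b; exact: sqrtr_ge0. Qed.

Lemma norm_normc (z : CC) : `|z| = (normc z)%:C.
Proof. by rewrite normc_def; case: z. Qed.

Lemma normc_real (x : RR) : normc x%:C = `|x|.
Proof. by rewrite /normc /= expr0n /= addr0 sqrtr_sqr. Qed.

Lemma normc_conj (z : CC) : normc z^* = normc z.
Proof. by case: z => a b; rewrite /normc /= sqrrN. Qed.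

(* conj(z) z = |z|^2: sums of such products express |g|^2 inside an ideal. *)
Lemma conj_mul_self (z : CC) : z^* * z = (normc z ^+ 2)%:C.
Proof.
case: z => a b; rewrite /normc sqr_sqrtr ?addr_ge0 ?sqr_ge0 //=.
rewrite /GRing.mul /= -complexr0; congr (_ +i* _); ring.
Qed.

Lemma normc_sum (k : nat) (F : 'I_k -> CC) :
  normc (\sum_(i < k) F i) <= \sum_(i < k) normc (F i).
Proof.
apply: (big_ind2 (fun x y => normc x <= y)) => //; first by rewrite normc0.
by move=> x1 y1 x2 y2 h1 h2; apply: (le_trans (le_normcD _ _)); exact: lerD.
Qed.

Lemma In_nth (T : Type) (x0 : T) (s : seq T) i :
  (i < size s)%N -> List.In (nth x0 s i) s.
Proof. by elim: s i => [|a s IH] [|i] //= hi; [left|right; exact: IH]. Qed.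

(* The square root is dominated by 1 + x; it keeps square roots tempered. *)
Lemma sqrt_le_1addr (x : RR) : 0 <= x -> Num.sqrt x <= 1 + x.
Proof. by move=> x0; rewrite -{2}(sqr_sqrtr x0); have := sqrtr_ge0 x; nra. Qed.

Lemma poly_bound_add (M1 M2 a b u v : RR) : 0 < M1 -> 0 < M2 -> 1 <= a -> 1 <= b ->
  u <= M1 * a -> v <= M2 * b -> u + v <= (M1 + M2) * (a * b).
Proof.
move=> M1_gt0 M2_gt0 a_ge1 b_ge1 hu hv.
have e1 : 0 <= M1 * a * (b - 1).
  by rewrite !mulr_ge0 ?subr_ge0 // ltW // (lt_le_trans ltr01).
have e2 : 0 <= M2 * b * (a - 1).
  by rewrite !mulr_ge0 ?subr_ge0 // ltW // (lt_le_trans ltr01).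
nra.
Qed.

(* If t > 0 satisfies t <= K t^2, then t^-4 <= K^4: this turns the growth bound
   r^(1/4) <= K sqrt r into a polynomial bound on 1/r. *)
Lemma inv_pow4_le (t K : RR) : 0 < t -> t <= K * t ^+ 2 -> (t ^+ 4)^-1 <= K ^+ 4.
Proof.
move=> t_gt0 ht; have Kt_ge1 : 1 <= K * t.
  by rewrite -(ler_pM2r t_gt0) mul1r -mulrA -expr2.
rewrite -(ler_pM2r (exprn_gt0 4 t_gt0)) mulVf ?gt_eqF ?exprn_gt0 //.
by rewrite -exprMn; apply: exprn_ege1.
Qed.

Section Tempered.
Variable d : nat.
Implicit Types (f g : Zd d -> CC) (n z : Zd d).

Definition weight n : RR := 1 + (l1norm n)%:R.

Lemma weightX_ge1 n m : 1 <= weight n ^+ m.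
Proof. by apply: exprn_ege1; rewrite /weight lerDl ler0n. Qed.

Lemma temperedE f : tempered f <->
  exists (M : RR) (m : nat), 0 < M /\ forall n, normc (f n) <= M * weight n ^+ m.
Proof.
split => -[M [m [M_gt0 H]]]; exists M, m; split => // n.
  by have := H n; rewrite norm_normc lecR.
by rewrite norm_normc lecR; exact: H.
Qed.

Lemma tempered_bounded f (c : RR) : (forall n, normc (f n) <= c) -> tempered f.
Proof.
move=> H; apply/temperedE; exists (`|c| + 1), 0%N; split.
  by rewrite ltr_pwDr // normr_ge0.
move=> n; rewrite expr0 mulr1; apply: (le_trans (H n)).
by rewrite (le_trans (ler_norm c)) // lerDl.
Qed.

Lemma tempered_dominated f g : tempered g ->
  (forall n, normc (f n) <= 1 + normc (g n)) -> tempered f.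
Proof.
move=> /temperedE [M [m [M_gt0 H]]] Hf; apply/temperedE; exists (1 + M), m.
split; first by rewrite ltr_pwDr.
move=> n; apply: (le_trans (Hf n)); have := H n; have := weightX_ge1 n m.
set X := weight n ^+ m; set Y := normc (g n) => X_ge1 hY; nra.
Qed.

Lemma tempered_conj f : tempered f -> tempered (fun n => (f n)^*).
Proof.
move=> /temperedE [M [m [M_gt0 H]]].
by apply/temperedE; exists M, m; split => // n; rewrite normc_conj.
Qed.

Lemma tempered_sqrt (h : Zd d -> RR) : (forall n, 0 <= h n) ->
  tempered (fun n => (h n)%:C) -> tempered (fun n => (Num.sqrt (h n))%:C).
Proof.
move=> h_ge0 Th; apply: (tempered_dominated _ Th) => n.
rewrite !normc_real !ger0_norm ?sqrtr_ge0 //; exact: sqrt_le_1addr.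
Qed.

Lemma tempered_sum_bound (k : nat) (A : nat -> Zd d -> CC) :
  (forall i, (i < k)%N -> tempered (A i)) ->
  exists (M : RR) (m : nat), 0 < M /\
    forall n, \sum_(i < k) normc (A i n) <= M * weight n ^+ m.
Proof.
elim: k => [|k IH] TA.
  by exists 1, 0%N; split => // n; rewrite big_ord0 expr0 mulr1.
have [M1 [m1 [M1_gt0 H1]]] := IH (fun i hi => TA i (ltnW hi)).
have /temperedE [M2 [m2 [M2_gt0 H2]]] := TA k (ltnSn k).
exists (M1 + M2), (m1 + m2)%N; split; first by rewrite addr_gt0.
move=> n; rewrite big_ord_recr /= exprD.
by apply: poly_bound_add; rewrite ?weightX_ge1.
Qed.

Definition delta z n : CC := if n == z then 1 else 0.
Definition codelta z n : CC := if n == z then 0 else 1.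

Lemma tempered_delta z : tempered (delta z).
Proof.
apply: (@tempered_bounded _ 1) => n; rewrite /delta.
by case: eqP => _; rewrite ?normc1 ?normc0.
Qed.

Lemma tempered_codelta z : tempered (codelta z).
Proof.
apply: (@tempered_bounded _ 1) => n; rewrite /codelta.
by case: eqP => _; rewrite ?normc1 ?normc0.
Qed.

Definition sqnorm (gs : seq (Zd d -> CC)) n : RR :=
  \sum_(i < size gs) normc (nth (fun _ => 0) gs i n) ^+ 2.

Lemma sqnorm_ge0 gs n : 0 <= sqnorm gs n.
Proof. by apply: sumr_ge0 => i _; exact: sqr_ge0. Qed.

Lemma normc_le_sqnorm gs n (i : 'I_(size gs)) :
  normc (nth (fun _ => 0) gs i n) <= Num.sqrt (sqnorm gs n).
Proof.
rewrite -(ger0_norm (normc_ge0 _)) -sqrtr_sqr; apply: ler_wsqrtr.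
rewrite /sqnorm (bigD1 i) //= lerDl; apply: sumr_ge0 => j _; exact: sqr_ge0.
Qed.

Section Ideal.
Variable P : (Zd d -> CC) -> Prop.

Lemma ideal_ext {f g} : P f -> (forall n, f n = g n) -> P g.
Proof. by move=> Pf fg; rewrite -(functional_extensionality _ _ fg). Qed.

Lemma ideal_sum (I : Type) (s : seq I) (H : I -> Zd d -> CC) :
  is_ideal P -> (forall i, P (H i)) -> P (fun n => \sum_(i <- s) H i n).
Proof.
move=> [_ P0 PD _] PH; elim: s => [|a s IH].
  by apply: (ideal_ext P0) => n; rewrite big_nil.
by apply: (ideal_ext (PD _ _ (PH a) IH)) => n; rewrite big_cons.
Qed.

Lemma sqnorm_in_ideal gs : is_ideal P ->
  (forall g, List.In g gs -> P g) -> P (fun n => (sqnorm gs n)%:C).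
Proof.
move=> Pideal Pgs; have [Htemp _ _ PM] := Pideal.
have Pg (i : 'I_(size gs)) : P (nth (fun _ => 0) gs i).
  by apply: Pgs; apply/In_nth/ltn_ord.
apply: ideal_ext (ideal_sum (index_enum 'I_(size gs)) _ Pideal
  (fun i => PM _ _ (tempered_conj (Htemp _ (Pg i))) (Pg i))) _ => n.
by rewrite /sqnorm rmorph_sum; apply: eq_bigr => i _; rewrite conj_mul_self.
Qed.

Lemma prime_radical f : is_prime_ideal P ->
  tempered f -> P (fun n => f n * f n) -> P f.
Proof. by move=> [_ Hprime] Tf /(Hprime _ _ Tf Tf) []. Qed.

Lemma prime_sqrt (h : Zd d -> RR) : is_prime_ideal P -> (forall n, 0 <= h n) ->
  P (fun n => (h n)%:C) -> P (fun n => (Num.sqrt (h n))%:C).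
Proof.
move=> Pprime h_ge0 Ph; have [[[Htemp _ _ _] _] _] := Pprime.
apply: (prime_radical Pprime (tempered_sqrt h h_ge0 (Htemp _ Ph))).
by apply: (ideal_ext Ph) => n; rewrite -rmorphM -expr2 sqr_sqrtr.
Qed.

Lemma vanishing_ideal z : is_proper_ideal P -> P (codelta z) ->
  forall f, P f <-> tempered f /\ f z = 0.
Proof.
move=> [[Htemp _ PD PM] P1_neq] Pcz f; split => [Pf|[Tf fz0]]; last first.
  apply: (ideal_ext (PM _ _ Tf Pcz)) => n; rewrite /codelta.
  by case: eqP => [->|_]; rewrite ?fz0 ?mulr0 ?mulr1.
split; first exact: Htemp.
have [//|fz_neq0] := eqVneq (f z) 0; exfalso; apply: P1_neq.
pose a n : CC := if n == z then (f z)^-1 else 0.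
have Ta : tempered a.
  apply: (@tempered_bounded _ (normc (f z)^-1)) => n; rewrite /a.
  by case: eqP => _; rewrite ?normc0 ?normc_ge0.
apply: (ideal_ext (PD _ _ (PM _ _ Ta Pf) Pcz)) => n; rewrite /a /codelta.
by case: eqP => [->|_]; rewrite ?mulVf ?addr0 ?mul0r ?add0r.
Qed.

Lemma prime_delta z : is_prime_ideal P -> ~ P (codelta z) -> P (delta z).
Proof.
move=> [[[_ P0 _ _] _] Hprime] Pcz_not.
have : P (fun n => delta z n * codelta z n).
  by apply: (ideal_ext P0) => n; rewrite /delta /codelta; case: eqP;
    rewrite ?mulr0 ?mul0r.
by case/(Hprime _ _ (tempered_delta z) (tempered_codelta z)).
Qed.

End Ideal.

Lemma combination_bound gs (as_ : seq (Zd d -> CC)) f :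
  size as_ = size gs -> (forall a, List.In a as_ -> tempered a) ->
  (forall n, f n = \sum_(i < size gs)
     nth (fun _ => 0) as_ i n * nth (fun _ => 0) gs i n) ->
  exists (M : RR) (m : nat), 0 < M /\
    forall n, normc (f n) <= M * weight n ^+ m * Num.sqrt (sqnorm gs n).
Proof.
move=> size_as Tas f_eq.
have Tai i : (i < size gs)%N -> tempered (nth (fun _ => 0) as_ i).
  by move=> hi; apply/Tas/In_nth; rewrite size_as.
have [M [m [M_gt0 HM]]] := tempered_sum_bound _ _ Tai.
exists M, m; split => // n; rewrite f_eq; apply: (le_trans (normc_sum _)).
apply: le_trans (_ : \sum_(i < size gs) normc (nth (fun _ => 0) as_ i n) *
  Num.sqrt (sqnorm gs n) <= _).
  apply: ler_sum => i _; rewrite normcM; apply: ler_wpM2l; first exact: normc_ge0.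
  exact: normc_le_sqnorm.
by rewrite -mulr_suml; apply: ler_wpM2r; [exact: sqrtr_ge0|exact: HM].
Qed.

Lemma tempered_inv (r : Zd d -> RR) (M : RR) (m : nat) : 0 < M ->
  (forall n, 0 < r n) ->
  (forall n, Num.sqrt (Num.sqrt (r n)) <= M * weight n ^+ m * Num.sqrt (r n)) ->
  tempered (fun n => (r n)^-1%:C).
Proof.
move=> M_gt0 r_gt0 Hr; apply/temperedE; exists (M ^+ 4), (m * 4)%N.
split; first exact: exprn_gt0.
move=> n; rewrite normc_real ger0_norm; last by rewrite invr_ge0 ltW.
set t := Num.sqrt (Num.sqrt (r n)).
have t_gt0 : 0 < t by rewrite !sqrtr_gt0.
have sqrt_r : Num.sqrt (r n) = t ^+ 2 by rewrite sqr_sqrtr ?sqrtr_ge0.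
have r_eq : r n = t ^+ 4.
  by rewrite (_ : 4%N = (2 * 2)%N) // exprM -sqrt_r sqr_sqrtr ?ltW.
rewrite exprM -exprMn r_eq; apply: inv_pow4_le => //.
by rewrite -sqrt_r; exact: Hr.
Qed.

End Tempered.

Theorem theorem4p1 (d : nat) (P : (Zd d -> CC) -> Prop) :
  is_prime_ideal P -> finitely_generated P ->
  exists nstar : Zd d, forall f : Zd d -> CC, P f <-> (tempered f /\ f nstar = 0).
Proof.
move=> Pprime [gs [Pgs Pgen]]; have [[Pideal P1_neq] _] := Pprime.
have [[z Pcz]|no_codelta] := classic (exists z, P (codelta z)).
  by exists z; apply: vanishing_ideal.
exfalso; have [_ _ _ PM] := Pideal.
have bound f : P f -> exists (M : RR) (m : nat), 0 < M /\
    forall n, normc (f n) <= M * weight n ^+ m * Num.sqrt (sqnorm gs n).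
  by move=> /Pgen [as_ [size_as [Tas f_eq]]]; exact: combination_bound size_as Tas f_eq.
have sqnorm_gt0 n : 0 < sqnorm gs n.
  have Pdelta : P (delta n).
    by apply: prime_delta => // Pcn; apply: no_codelta; exists n.
  have [M [m [_ HM]]] := bound _ Pdelta; have := HM n.
  rewrite /delta eqxx normc1 lt_def sqnorm_ge0 andbT.
  by apply: contraTN => /eqP ->; rewrite sqrtr0 mulr0 ler10.
have Pr := sqnorm_in_ideal gs Pideal Pgs.
have Pq := prime_sqrt _ Pprime (fun n => sqrtr_ge0 _)
  (prime_sqrt _ Pprime (sqnorm_ge0 gs) Pr).
have [M [m [M_gt0 HM]]] := bound _ Pq.
have quarter_bound n : Num.sqrt (Num.sqrt (sqnorm gs n)) <=
    M * weight n ^+ m * Num.sqrt (sqnorm gs n).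
  by have := HM n; rewrite normc_real ger0_norm ?sqrtr_ge0.
have Tinv := tempered_inv (sqnorm gs) M m M_gt0 sqnorm_gt0 quarter_bound.
apply: P1_neq; apply: (ideal_ext P (PM _ _ Tinv Pr)) => n.
by rewrite -rmorphM mulVf ?rmorph1 // lt0r_neq0.
Qed.
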